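(* Let $\mathcal C$ be a $\dagger$-symmetric monoidal category, let $(A,\delta_A,\gamma_A)$ be a $\dagger$-Frobenius structure in $\mathcal C$, and let $U:A\to A$ be unitary. Then $(A,\ (U\otimes U)\circ\delta_A\circ U^\dagger,\ \gamma_A\circ U^\dagger)$ is also a $\dagger$-Frobenius structure. Moreover, the two $\dagger$-compact structures induced by these two $\dagger$-Frobenius structures (namely $\epsilon=\gamma_A\circ\delta_A^\dagger$ and $\epsilon'=\gamma_A\circ U^\dagger\circ\big((U\otimes U)\circ\delta_A\circ U^\dagger\big)^\dagger$, both of type $A\otimes A\to I$) coincide if and only if $U_*=U$, where $U_*$ is computed with respect to the self-dual compact structure $\epsilon$ on $A$ (with $A^*=A$).
   Context: A $\dagger$-symmetric monoidal category ($\dagger$-SMC) is a symmetric monoidal category (associativity and unit isomorphisms taken strict, symmetry $\sigma_{A,B}:A\otimes B\to B\otimes A$) with an involutive, identity-on-objects contravariant functor $\dagger$ satisfying $(g\circ f)^\dagger=f^\dagger\circ g^\dagger$, $f^{\dagger\dagger}=f$, $(f\otimes g)^\dagger=f^\dagger\otimes g^\dagger$, and $\sigma^\dagger=\sigma^{-1}$. A morphism $f$ is unitary if it is invertible with $f^{-1}=f^\dagger$. A $\dagger$-Frobenius structure is a co-commutative comonoid $(A,\delta_A:A\to A\otimes A,\gamma_A:A\to I)$ (coassociative, counital) such that $\delta_A^\dagger\circ\delta_A=1_A$ and $\delta_A\circ\delta_A^\dagger=(\delta_A^\dagger\otimes 1_A)\circ(1_A\otimes\delta_A)$. A $\dagger$-compact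 structure is a pair $(A,\epsilon_A:A\otimes A^*\to I)$ (for some object $A^*$) with $(\epsilon_A\otimes 1_A)\circ(1_A\otimes\sigma_{A,A^*})\circ(1_A\otimes\epsilon_A^\dagger)=1_A$; for a $\dagger$-Frobenius structure, $(A,\gamma_A\circ\delta_A^\dagger)$ is a $\dagger$-compact structure with $A^*=A$. Given such a self-dual compact structure $\epsilon:A\otimes A\to I$, for $f:A\to A$ define $f^*:=(1_A\otimes\epsilon)\circ(1_A\otimes f\otimes 1_A)\circ(\epsilon^\dagger\otimes 1_A):A\to A$ and $f_*:=(f^\dagger)^*$. *)

Set Implicit Arguments.
Set Universe Polymorphism.

Declare Scope dsmc_scope.
Delimit Scope dsmc_scope with dsmc.
Open Scope dsmc_scope.

(* The associator [assoc A B C : (A⊗B)⊗C -> A⊗(B⊗C)] and unitors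
   [lunit A : I⊗A -> A], [runit A : A⊗I -> A] are explicit; they are
   required to be natural, coherent (pentagon, triangle) and unitary. *)
Record DSMC : Type := {
  Ob : Type;
  Hom : Ob -> Ob -> Type;
  idm : forall A, Hom A A;
  comp : forall A B C, Hom B C -> Hom A B -> Hom A C;
  tens : Ob -> Ob -> Ob;
  unitOb : Ob;
  tensm : forall A B C D, Hom A B -> Hom C D -> Hom (tens A C) (tens B D);
  assoc : forall A B C, Hom (tens (tens A B) C) (tens A (tens B C));
  lunit : forall A, Hom (tens unitOb A) A;
  runit : forall A, Hom (tens A unitOb) A;
  sym : forall A B, Hom (tens A B) (tens B A);
  dag : forall A B, Hom A B -> Hom B A;

  comp_assoc : forall A B C D (h : Hom C D) (g : Hom B C) (f : Hom A B),
      comp h (comp g f) = comp (comp h g) f;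
  comp_id_l : forall A B (f : Hom A B), comp (idm B) f = f;
  comp_id_r : forall A B (f : Hom A B), comp f (idm A) = f;
  tensm_id : forall A B, tensm (idm A) (idm B) = idm (tens A B);
  tensm_comp : forall A B C A' B' C' (g : Hom B C) (f : Hom A B)
      (g' : Hom B' C') (f' : Hom A' B'),
      tensm (comp g f) (comp g' f') = comp (tensm g g') (tensm f f');
  assoc_nat : forall A B C A' B' C' (f : Hom A A') (g : Hom B B') (h : Hom C C'),
      comp (assoc A' B' C') (tensm (tensm f g) h)
      = comp (tensm f (tensm g h)) (assoc A B C);
  lunit_nat : forall A B (f : Hom A B),
      comp (lunit B) (tensm (idm unitOb) f) = comp f (lunit A);
  runit_nat : forall A B (f : Hom A B),
      comp (runit B) (tensm f (idm unitOb)) = comp f (runit A);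
  sym_nat : forall A B A' B' (f : Hom A A') (g : Hom B B'),
      comp (sym A' B') (tensm f g) = comp (tensm g f) (sym A B);
  pentagon : forall A B C D,
      comp (assoc A B (tens C D)) (assoc (tens A B) C D)
      = comp (tensm (idm A) (assoc B C D))
             (comp (assoc A (tens B C) D) (tensm (assoc A B C) (idm D)));
  triangle : forall A B,
      comp (tensm (idm A) (lunit B)) (assoc A unitOb B)
      = tensm (runit A) (idm B);
  sym_inv : forall A B, comp (sym B A) (sym A B) = idm (tens A B);
  hexagon : forall A B C,
      comp (assoc B C A) (comp (sym A (tens B C)) (assoc A B C))
      = comp (tensm (idm B) (sym A C))
             (comp (assoc B A C) (tensm (sym A B) (idm C)));
  dag_comp : forall A B C (g : Hom B C) (f : Hom A B),
      dag (comp g f) = comp (dag f) (dag g);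
  dag_id : forall A, dag (idm A) = idm A;
  dag_invol : forall A B (f : Hom A B), dag (dag f) = f;
  dag_tensm : forall A B C D (f : Hom A B) (g : Hom C D),
      dag (tensm f g) = tensm (dag f) (dag g);
  dag_sym : forall A B, dag (sym A B) = sym B A;
  (* structural isomorphisms are unitary (in the strict case they are identities) *)
  assoc_unitary_l : forall A B C, comp (dag (assoc A B C)) (assoc A B C) = idm _;
  assoc_unitary_r : forall A B C, comp (assoc A B C) (dag (assoc A B C)) = idm _;
  lunit_unitary_l : forall A, comp (dag (lunit A)) (lunit A) = idm _;
  lunit_unitary_r : forall A, comp (lunit A) (dag (lunit A)) = idm _;
  runit_unitary_l : forall A, comp (dag (runit A)) (runit A) = idm _;
  runit_unitary_r : forall A, comp (runit A) (dag (runit A)) = idm _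
}.

Arguments idm {d} A.
Arguments comp {d A B C} _ _.
Arguments tens {d} _ _.
Arguments unitOb {d}.
Arguments tensm {d A B C D} _ _.
Arguments assoc {d} A B C.
Arguments lunit {d} A.
Arguments runit {d} A.
Arguments sym {d} A B.
Arguments dag {d A B} _.

Notation "g ∘ f" := (comp g f) (at level 40, left associativity) : dsmc_scope.
Notation "A ⊗ B" := (tens A B) (at level 35, right associativity) : dsmc_scope.
Notation "f ⊠ g" := (tensm f g) (at level 35, right associativity) : dsmc_scope.
Notation "f †" := (dag f) (at level 5, format "f †") : dsmc_scope.

Section Defs.
Context {C : DSMC}.

Definition unitary {A B : Ob C} (f : Hom C A B) : Prop :=
  f† ∘ f = idm A /\ f ∘ f† = idm B.

Definition dagger_frobenius {A : Ob C} (δ : Hom C A (A ⊗ A)) (γ : Hom C A unitOb)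
  : Prop :=
  assoc A A A ∘ (δ ⊠ idm A) ∘ δ = (idm A ⊠ δ) ∘ δ /\
  lunit A ∘ (γ ⊠ idm A) ∘ δ = idm A /\
  runit A ∘ (idm A ⊠ γ) ∘ δ = idm A /\
  sym A A ∘ δ = δ /\
  δ† ∘ δ = idm A /\
  δ ∘ δ† = (δ† ⊠ idm A) ∘ (assoc A A A)† ∘ (idm A ⊠ δ).

(* For a self-dual compact structure ε : A⊗A -> I,
   f^* := (1⊗ε)∘(1⊗f⊗1)∘(ε†⊗1)  (unitors/associator inserted). *)
Definition upper_star {A : Ob C} (ε : Hom C (A ⊗ A) unitOb) (f : Hom C A A)
  : Hom C A A :=
  runit A ∘ (idm A ⊠ ε) ∘ (idm A ⊠ (f ⊠ idm A)) ∘ assoc A A A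
    ∘ (ε† ⊠ idm A) ∘ (lunit A)†.

Definition lower_star {A : Ob C} (ε : Hom C (A ⊗ A) unitOb) (f : Hom C A A)
  : Hom C A A := upper_star ε (f†).

End Defs.

(* Transporting
   the comultiplication and counit along U gives δ_U := (U⊗U)∘δ∘U† and γ∘U†;
   every axiom of a dagger-Frobenius structure is preserved because the factors
   U†∘U cancel.  The induced compact structure of the transported structure is
   ε∘(U†⊗U†), where ε := γ∘δ† is that of (A, δ, γ).

   For the second half we use the standard characterisation of transposition
   for a self-dual compact structure ε satisfying both snake equations:
       f^* = h   iff   ε∘(f⊗1) = ε∘(1⊗h).
   Since ε comes from a dagger-Frobenius structure it satisfies both snakes.
   Taking f = U†, h = U and cancelling the isomorphism 1⊗U then gives
       ε = ε∘(U†⊗U†)   iff   U_* = U. *)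
From Stdlib Require Import Setoid.

Section DaggerSymmetricMonoidal.
Context {C : DSMC}.

Arguments comp_assoc {d A B C D} h g f.
Arguments comp_id_l {d A B} f.
Arguments comp_id_r {d A B} f.
Arguments tensm_id {d} A B.
Arguments tensm_comp {d A B C A' B' C'} g f g' f'.
Arguments assoc_nat {d A B C A' B' C'} f g h.
Arguments lunit_nat {d A B} f.
Arguments runit_nat {d A B} f.
Arguments sym_nat {d A B A' B'} f g.
Arguments pentagon {d} A B C D.
Arguments triangle {d} A B.
Arguments dag_comp {d A B C} g f.
Arguments dag_id {d} A.
Arguments dag_invol {d A B} f.
Arguments dag_tensm {d A B C D} f g.
Arguments assoc_unitary_l {d} A B C.
Arguments assoc_unitary_r {d} A B C.
Arguments lunit_unitary_l {d} A.
Arguments lunit_unitary_r {d} A.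
Arguments runit_unitary_l {d} A.
Arguments runit_unitary_r {d} A.

Ltac assoc_right := repeat rewrite <- comp_assoc.

(* An equation between composites can be used inside a right-associated chain. *)
Lemma precomp2 {X Y Z W : Ob C} (x : Hom C Y Z) (y : Hom C X Y) (z : Hom C X Z) :
  x ∘ y = z -> forall (r : Hom C W X), x ∘ (y ∘ r) = z ∘ r.
Proof. intros H r. rewrite comp_assoc, H. reflexivity. Qed.

Lemma precomp3 {X Y Z V W : Ob C} (x : Hom C Y Z) (y : Hom C X Y) (w : Hom C V X) z :
  x ∘ (y ∘ w) = z -> forall (r : Hom C W V), x ∘ (y ∘ (w ∘ r)) = z ∘ r.
Proof. intros H r. rewrite (comp_assoc y), comp_assoc, H. reflexivity. Qed.

Lemma whisker_l_comp {A B D X : Ob C} (x : Hom C B D) (y : Hom C A B) :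
  idm X ⊠ (x ∘ y) = (idm X ⊠ x) ∘ (idm X ⊠ y).
Proof. rewrite <- tensm_comp, comp_id_l. reflexivity. Qed.

Lemma whisker_r_comp {A B D X : Ob C} (x : Hom C B D) (y : Hom C A B) :
  (x ∘ y) ⊠ idm X = (x ⊠ idm X) ∘ (y ⊠ idm X).
Proof. rewrite <- tensm_comp, comp_id_l. reflexivity. Qed.

Lemma tensm_split_rl {A B D E : Ob C} (f : Hom C A B) (g : Hom C D E) :
  f ⊠ g = (f ⊠ idm E) ∘ (idm A ⊠ g).
Proof. rewrite <- tensm_comp, comp_id_l, comp_id_r. reflexivity. Qed.

Lemma tensm_split_lr {A B D E : Ob C} (f : Hom C A B) (g : Hom C D E) :
  f ⊠ g = (idm B ⊠ g) ∘ (f ⊠ idm D).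
Proof. rewrite <- tensm_comp, comp_id_l, comp_id_r. reflexivity. Qed.

Lemma tensm_comp_l {A B D X Y : Ob C} (f : Hom C B D) (g : Hom C A B) (h : Hom C X Y) :
  (f ∘ g) ⊠ h = (f ⊠ h) ∘ (g ⊠ idm X).
Proof. rewrite <- tensm_comp, comp_id_r. reflexivity. Qed.

Lemma tensm_comp_r {A B D X Y : Ob C} (f : Hom C B D) (g : Hom C A B) (h : Hom C X Y) :
  h ⊠ (f ∘ g) = (h ⊠ f) ∘ (idm X ⊠ g).
Proof. rewrite <- tensm_comp, comp_id_r. reflexivity. Qed.

Lemma lunit_dag_nat {A B : Ob C} (f : Hom C A B) :
  (idm unitOb ⊠ f) ∘ (lunit A)† = (lunit B)† ∘ f.
Proof.
  rewrite <- (comp_id_l ((idm unitOb ⊠ f) ∘ (lunit A)†)), <- (lunit_unitary_l B).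
  assoc_right. rewrite (precomp2 _ _ _ (lunit_nat f)).
  assoc_right. rewrite lunit_unitary_r, comp_id_r. reflexivity.
Qed.

Lemma assoc_dag_nat {A B D A' B' D' : Ob C}
  (f : Hom C A A') (g : Hom C B B') (h : Hom C D D') :
  (assoc A' B' D')† ∘ (f ⊠ (g ⊠ h)) = ((f ⊠ g) ⊠ h) ∘ (assoc A B D)†.
Proof.
  rewrite <- (comp_id_r ((assoc A' B' D')† ∘ _)), <- (assoc_unitary_r A B D).
  assoc_right. rewrite (precomp2 _ _ _ (eq_sym (assoc_nat f g h))).
  assoc_right. rewrite (precomp2 _ _ _ (assoc_unitary_l _ _ _)), comp_id_l.
  reflexivity.
Qed.

Lemma isometry_cancel {A B X : Ob C} (u : Hom C A B) (p q : Hom C X A) :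
  u† ∘ u = idm A -> u ∘ p = u ∘ q -> p = q.
Proof.
  intros Hu H.
  rewrite <- (comp_id_l p), <- (comp_id_l q), <- Hu, <- !comp_assoc, H.
  reflexivity.
Qed.

Lemma coisometry_cancel {A B X : Ob C} (u : Hom C A B) (p q : Hom C B X) :
  u ∘ u† = idm B -> p ∘ u = q ∘ u -> p = q.
Proof.
  intros Hu H.
  rewrite <- (comp_id_r p), <- (comp_id_r q), <- Hu, !comp_assoc, H.
  reflexivity.
Qed.

Lemma whisker_r_coisometry {A B X : Ob C} (u : Hom C A B) :
  u ∘ u† = idm B -> (u ⊠ idm X) ∘ (u ⊠ idm X)† = idm (B ⊗ X).
Proof.
  intro H. rewrite dag_tensm, dag_id, <- tensm_comp, H, comp_id_l, tensm_id.
  reflexivity.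
Qed.

Lemma whisker_unit_r_inj {A B : Ob C} (f g : Hom C A B) :
  f ⊠ idm unitOb = g ⊠ idm unitOb -> f = g.
Proof.
  intro H. rewrite <- (comp_id_r f), <- (comp_id_r g), <- (runit_unitary_r A).
  rewrite !comp_assoc, <- !runit_nat, H. reflexivity.
Qed.

Lemma whisker_unit_l_inj {A B : Ob C} (f g : Hom C A B) :
  idm unitOb ⊠ f = idm unitOb ⊠ g -> f = g.
Proof.
  intro H. rewrite <- (comp_id_r f), <- (comp_id_r g), <- (lunit_unitary_r A).
  rewrite !comp_assoc, <- !lunit_nat, H. reflexivity.
Qed.

Lemma runit_tens (A B : Ob C) :
  (idm A ⊠ runit B) ∘ assoc A B unitOb = runit (A ⊗ B).
Proof.
  symmetry. apply whisker_unit_r_inj.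
  apply (isometry_cancel (assoc A B unitOb)); [apply assoc_unitary_l|].
  rewrite <- (triangle (A ⊗ B) unitOb), <- (tensm_id A B).
  rewrite comp_assoc, assoc_nat. assoc_right.
  rewrite (pentagon A B unitOb unitOb). assoc_right.
  rewrite (precomp2 _ _ _ (eq_sym (whisker_l_comp _ _))), triangle.
  rewrite (precomp2 _ _ _ (eq_sym (assoc_nat _ _ _))), whisker_r_comp.
  assoc_right. reflexivity.
Qed.

Lemma lunit_tens (A B : Ob C) :
  lunit (A ⊗ B) ∘ assoc unitOb A B = lunit A ⊠ idm B.
Proof.
  apply whisker_unit_l_inj.
  apply (coisometry_cancel (assoc unitOb (unitOb ⊗ A) B)); [apply assoc_unitary_r|].
  apply (coisometry_cancel (assoc unitOb unitOb A ⊠ idm B));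
    [apply whisker_r_coisometry, assoc_unitary_r|].
  transitivity (assoc unitOb A B ∘ ((runit unitOb ⊠ idm A) ⊠ idm B)).
  - rewrite whisker_l_comp. assoc_right.
    rewrite <- pentagon, comp_assoc, triangle, <- (tensm_id A B), <- assoc_nat.
    reflexivity.
  - assoc_right. rewrite (precomp2 _ _ _ (eq_sym (assoc_nat _ _ _))).
    assoc_right. rewrite <- whisker_r_comp, triangle. reflexivity.
Qed.

Lemma lunit_runit_unit : lunit (@unitOb C) = runit unitOb.
Proof.
  apply whisker_unit_r_inj.
  rewrite <- lunit_tens, <- triangle. f_equal.
  apply (isometry_cancel (lunit unitOb)); [apply lunit_unitary_l|].
  rewrite lunit_nat. reflexivity.
Qed.

Lemma whisker_runit (A B : Ob C) :
  idm A ⊠ runit B = runit (A ⊗ B) ∘ (assoc A B unitOb)†.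
Proof.
  rewrite <- runit_tens. assoc_right. rewrite assoc_unitary_r, comp_id_r.
  reflexivity.
Qed.

Lemma lunit_tens_dag (A B : Ob C) :
  lunit (A ⊗ B) = (lunit A ⊠ idm B) ∘ (assoc unitOb A B)†.
Proof.
  rewrite <- lunit_tens. assoc_right. rewrite assoc_unitary_r, comp_id_r.
  reflexivity.
Qed.

Lemma pentagon_dag (A B D E : Ob C) :
  (assoc (A ⊗ B) D E)† ∘ ((assoc A B (D ⊗ E))† ∘ (idm A ⊠ assoc B D E))
  = ((assoc A B D)† ⊠ idm E) ∘ (assoc A (B ⊗ D) E)†.
Proof.
  rewrite comp_assoc, <- dag_comp, pentagon, !dag_comp. assoc_right.
  rewrite !dag_tensm, !dag_id, <- tensm_comp, assoc_unitary_l, comp_id_l,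
    tensm_id, comp_id_r.
  reflexivity.
Qed.

Lemma triangle_dag (A B : Ob C) :
  (assoc A unitOb B)† ∘ (idm A ⊠ (lunit B)†) = (runit A)† ⊠ idm B.
Proof.
  rewrite <- (dag_id A), <- dag_tensm, <- dag_comp, triangle, dag_tensm, dag_id.
  reflexivity.
Qed.

Definition snake_l {A : Ob C} (ε : Hom C (A ⊗ A) unitOb) : Prop :=
  runit A ∘ (idm A ⊠ ε) ∘ assoc A A A ∘ (ε† ⊠ idm A) ∘ (lunit A)† = idm A.

Definition snake_r {A : Ob C} (ε : Hom C (A ⊗ A) unitOb) : Prop :=
  lunit A ∘ (ε ⊠ idm A) ∘ (assoc A A A)† ∘ (idm A ⊠ ε†) ∘ (runit A)† = idm A.

Lemma upper_star_unique {A : Ob C} (ε : Hom C (A ⊗ A) unitOb) (f h : Hom C A A) :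
  snake_l ε -> ε ∘ (f ⊠ idm A) = ε ∘ (idm A ⊠ h) -> upper_star ε f = h.
Proof.
  unfold snake_l, upper_star. intros S H.
  assoc_right. rewrite (precomp2 _ _ _ (eq_sym (whisker_l_comp ε (f ⊠ idm A)))), H.
  rewrite whisker_l_comp. assoc_right.
  rewrite (precomp2 _ _ _ (eq_sym (assoc_nat _ _ _))). assoc_right.
  rewrite tensm_id, (precomp2 _ _ _ (eq_sym (tensm_split_lr _ _))).
  rewrite (tensm_split_rl (ε†) h). assoc_right. rewrite lunit_dag_nat.
  rewrite !comp_assoc, S. apply comp_id_l.
Qed.

Lemma upper_star_slide {A : Ob C} (ε : Hom C (A ⊗ A) unitOb) (f : Hom C A A) :
  snake_r ε -> ε ∘ (idm A ⊠ upper_star ε f) = ε ∘ (f ⊠ idm A).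
Proof.
  unfold snake_r, upper_star. intros S.
  set (εf := ε ∘ (f ⊠ idm A)).
  assoc_right. rewrite (precomp2 _ _ _ (eq_sym (whisker_l_comp ε (f ⊠ idm A)))).
  fold εf. rewrite !whisker_l_comp, whisker_runit. assoc_right.
  rewrite (precomp2 _ _ _ (eq_sym (runit_nat ε))). assoc_right.
  rewrite (precomp2 _ _ _ (assoc_dag_nat _ _ _)). assoc_right.
  rewrite tensm_id, (precomp2 _ _ _ (eq_sym (tensm_split_rl _ _))).
  rewrite (tensm_split_lr ε εf). assoc_right.
  rewrite <- lunit_runit_unit, (precomp2 _ _ _ (lunit_nat εf)). assoc_right.
  rewrite lunit_tens_dag. assoc_right. rewrite <- (tensm_id A A).
  rewrite (precomp2 _ _ _ (assoc_dag_nat _ _ _)). assoc_right.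
  rewrite (precomp2 _ _ _ (eq_sym (whisker_r_comp _ _))).
  rewrite (precomp3 _ _ _ _ (pentagon_dag _ _ _ _)). assoc_right.
  rewrite (precomp2 _ _ _ (assoc_dag_nat _ _ _)). assoc_right.
  rewrite triangle_dag, <- !whisker_r_comp, !comp_assoc, S, tensm_id, comp_id_r.
  reflexivity.
Qed.

Lemma upper_star_iff {A : Ob C} (ε : Hom C (A ⊗ A) unitOb) (f h : Hom C A A) :
  snake_l ε -> snake_r ε ->
  upper_star ε f = h <-> ε ∘ (f ⊠ idm A) = ε ∘ (idm A ⊠ h).
Proof.
  intros Sl Sr. split.
  - intros <-. symmetry. apply upper_star_slide, Sr.
  - apply upper_star_unique, Sl.
Qed.

Definition frobenius_cup {A : Ob C} (δ : Hom C A (A ⊗ A)) (γ : Hom C A unitOb)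
  : Hom C (A ⊗ A) unitOb := γ ∘ δ†.

Section FrobeniusSnakes.
Context {A : Ob C} (δ : Hom C A (A ⊗ A)) (γ : Hom C A unitOb).
Hypothesis Frob : dagger_frobenius δ γ.

(* The mirror-image Frobenius law (1⊗δ†)∘α∘(δ⊗1) = δ∘δ†, its dagger. *)
Lemma frobenius_law_mirror :
  (idm A ⊠ δ†) ∘ (assoc A A A ∘ (δ ⊠ idm A)) = δ ∘ δ†.
Proof.
  destruct Frob as (_ & _ & _ & _ & _ & Hfrob).
  transitivity ((δ ∘ δ†)†).
  - rewrite Hfrob, !dag_comp, !dag_tensm, !dag_invol, !dag_id. assoc_right.
    reflexivity.
  - rewrite dag_comp, dag_invol. reflexivity.
Qed.

(* Each snake reduces, via a Frobenius law, to the dagger of a counit law. *)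
Lemma frobenius_snake_l : snake_l (frobenius_cup δ γ).
Proof.
  pose proof frobenius_law_mirror as Hmirror.
  destruct Frob as (_ & Hcounit_l & Hcounit_r & _).
  unfold snake_l, frobenius_cup.
  rewrite dag_comp, dag_invol, whisker_l_comp, whisker_r_comp. assoc_right.
  rewrite (precomp3 _ _ _ _ Hmirror), !comp_assoc, Hcounit_r, comp_id_l.
  transitivity ((lunit A ∘ (γ ⊠ idm A) ∘ δ)†).
  - rewrite !dag_comp, dag_tensm, dag_id. assoc_right. reflexivity.
  - rewrite Hcounit_l. apply dag_id.
Qed.

Lemma frobenius_snake_r : snake_r (frobenius_cup δ γ).
Proof.
  destruct Frob as (_ & Hcounit_l & Hcounit_r & _ & _ & Hfrob).
  unfold snake_r, frobenius_cup.
  rewrite dag_comp, dag_invol, whisker_l_comp, whisker_r_comp. assoc_right.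
  rewrite <- comp_assoc in Hfrob.
  rewrite (precomp3 _ _ _ _ (eq_sym Hfrob)), !comp_assoc, Hcounit_l, comp_id_l.
  transitivity ((runit A ∘ (idm A ⊠ γ) ∘ δ)†).
  - rewrite !dag_comp, dag_tensm, dag_id. assoc_right. reflexivity.
  - rewrite Hcounit_r. apply dag_id.
Qed.

End FrobeniusSnakes.

Definition conj_comult {A B : Ob C} (U : Hom C A B) (δ : Hom C A (A ⊗ A))
  : Hom C B (B ⊗ B) := (U ⊠ U) ∘ δ ∘ U†.

Section UnitaryTransport.
Context {A B : Ob C} (δ : Hom C A (A ⊗ A)) (γ : Hom C A unitOb) (U : Hom C A B).
Hypothesis Frob : dagger_frobenius δ γ.
Hypothesis U_isometry : U† ∘ U = idm A.
Hypothesis U_coisometry : U ∘ U† = idm B.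

Lemma conj_coassoc :
  assoc B B B ∘ (conj_comult U δ ⊠ idm B) ∘ conj_comult U δ
  = (idm B ⊠ conj_comult U δ) ∘ conj_comult U δ.
Proof.
  destruct Frob as (Hcoassoc & _).
  unfold conj_comult.
  transitivity ((U ⊠ (U ⊠ U)) ∘ (idm A ⊠ δ) ∘ δ ∘ U†).
  - assoc_right. rewrite (precomp2 _ _ _ (eq_sym (tensm_comp _ _ _ _))).
    assoc_right. rewrite U_isometry, comp_id_r, comp_id_l, tensm_comp_l.
    assoc_right. rewrite (precomp2 _ _ _ (assoc_nat _ _ _)). assoc_right.
    rewrite <- comp_assoc in Hcoassoc. rewrite (precomp3 _ _ _ _ Hcoassoc).
    assoc_right. reflexivity.
  - symmetry. assoc_right. rewrite (precomp2 _ _ _ (eq_sym (tensm_comp _ _ _ _))).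
    assoc_right. rewrite U_isometry, comp_id_r, comp_id_l, tensm_comp_r.
    assoc_right. reflexivity.
Qed.

Lemma conj_counit_l :
  lunit B ∘ ((γ ∘ U†) ⊠ idm B) ∘ conj_comult U δ = idm B.
Proof.
  destruct Frob as (_ & Hcounit_l & _).
  unfold conj_comult.
  assoc_right. rewrite (precomp2 _ _ _ (eq_sym (tensm_comp _ _ _ _))). assoc_right.
  rewrite U_isometry, comp_id_r, comp_id_l, (tensm_split_lr γ U). assoc_right.
  rewrite (precomp2 _ _ _ (lunit_nat _)). assoc_right.
  rewrite <- comp_assoc in Hcounit_l.
  rewrite (precomp3 _ _ _ _ Hcounit_l), comp_id_l. exact U_coisometry.
Qed.

Lemma conj_counit_r :
  runit B ∘ (idm B ⊠ (γ ∘ U†)) ∘ conj_comult U δ = idm B.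
Proof.
  destruct Frob as (_ & _ & Hcounit_r & _).
  unfold conj_comult.
  assoc_right. rewrite (precomp2 _ _ _ (eq_sym (tensm_comp _ _ _ _))). assoc_right.
  rewrite U_isometry, comp_id_r, comp_id_l, (tensm_split_rl U γ). assoc_right.
  rewrite (precomp2 _ _ _ (runit_nat _)). assoc_right.
  rewrite <- comp_assoc in Hcounit_r.
  rewrite (precomp3 _ _ _ _ Hcounit_r), comp_id_l. exact U_coisometry.
Qed.

Lemma conj_cocomm : sym B B ∘ conj_comult U δ = conj_comult U δ.
Proof.
  destruct Frob as (_ & _ & _ & Hcocomm & _).
  unfold conj_comult.
  assoc_right. rewrite (precomp2 _ _ _ (sym_nat _ _)). assoc_right.
  rewrite (precomp2 _ _ _ Hcocomm). reflexivity.
Qed.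

Lemma conj_isometry : (conj_comult U δ)† ∘ conj_comult U δ = idm B.
Proof.
  destruct Frob as (_ & _ & _ & _ & Hiso & _).
  unfold conj_comult.
  rewrite !dag_comp, !dag_tensm, !dag_invol. assoc_right.
  rewrite (precomp2 _ _ _ (eq_sym (tensm_comp _ _ _ _))), U_isometry, tensm_id,
    comp_id_l, (precomp2 _ _ _ Hiso), comp_id_l.
  exact U_coisometry.
Qed.

Lemma whisker_conj_comult :
  idm B ⊠ conj_comult U δ = (U ⊠ (U ⊠ U)) ∘ (idm A ⊠ δ) ∘ (U† ⊠ U†).
Proof. unfold conj_comult. rewrite <- !tensm_comp, comp_id_r, U_coisometry. reflexivity. Qed.

Lemma conj_frobenius_law :
  conj_comult U δ ∘ (conj_comult U δ)†
  = ((conj_comult U δ)† ⊠ idm B) ∘ (assoc B B B)† ∘ (idm B ⊠ conj_comult U δ).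
Proof.
  destruct Frob as (_ & _ & _ & _ & _ & Hfrob).
  rewrite whisker_conj_comult. unfold conj_comult.
  rewrite !dag_comp, !dag_tensm, !dag_invol. assoc_right.
  rewrite (precomp2 _ _ _ (assoc_dag_nat _ _ _)). assoc_right.
  rewrite (precomp2 _ _ _ (eq_sym (tensm_comp _ _ _ _))). assoc_right.
  rewrite <- (tensm_comp U† U), U_isometry, tensm_id, comp_id_r, comp_id_l,
    tensm_comp_l.
  assoc_right. rewrite (precomp2 _ _ _ U_isometry), comp_id_l.
  rewrite <- comp_assoc in Hfrob. rewrite (precomp2 _ _ _ Hfrob).
  assoc_right. reflexivity.
Qed.

Lemma conj_dagger_frobenius : dagger_frobenius (conj_comult U δ) (γ ∘ U†).
Proof.
  repeat split.
  - exact conj_coassoc.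
  - exact conj_counit_l.
  - exact conj_counit_r.
  - exact conj_cocomm.
  - exact conj_isometry.
  - exact conj_frobenius_law.
Qed.

Lemma conj_frobenius_cup :
  frobenius_cup (conj_comult U δ) (γ ∘ U†) = frobenius_cup δ γ ∘ (U† ⊠ U†).
Proof.
  unfold frobenius_cup, conj_comult.
  rewrite !dag_comp, !dag_tensm, !dag_invol. assoc_right.
  rewrite (precomp2 _ _ _ U_isometry), comp_id_l. reflexivity.
Qed.

End UnitaryTransport.

Lemma cup_invariant_iff_lower_star {A : Ob C} (ε : Hom C (A ⊗ A) unitOb) (U : Hom C A A) :
  snake_l ε -> snake_r ε -> unitary U ->
  ε = ε ∘ (U† ⊠ U†) <-> lower_star ε U = U.
Proof.
  intros Sl Sr [U_isometry U_coisometry].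
  unfold lower_star. rewrite (upper_star_iff _ _ _ Sl Sr).
  (* The two equations differ by pre-composition with the isomorphism 1⊗U. *)
  split; intro H.
  - rewrite H at 2. assoc_right.
    rewrite <- tensm_comp, U_isometry, comp_id_r. reflexivity.
  - rewrite (tensm_split_rl U† U†), comp_assoc, H. assoc_right.
    rewrite <- tensm_comp, U_coisometry, comp_id_l, tensm_id, comp_id_r.
    reflexivity.
Qed.

End DaggerSymmetricMonoidal.

Theorem mainTheorem1 (C : DSMC) (A : Ob C)
  (δ : Hom C A (A ⊗ A)) (γ : Hom C A unitOb) (U : Hom C A A) :
  dagger_frobenius δ γ -> unitary U ->
  dagger_frobenius ((U ⊠ U) ∘ δ ∘ U†) (γ ∘ U†) /\
  (γ ∘ δ† = γ ∘ U† ∘ ((U ⊠ U) ∘ δ ∘ U†)† <-> lower_star (γ ∘ δ†) U = U).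
Proof.
  intros Frob HU. pose proof HU as [U_isometry U_coisometry]. split.
  - exact (conj_dagger_frobenius δ γ U Frob U_isometry U_coisometry).
  - change (frobenius_cup δ γ = frobenius_cup (conj_comult U δ) (γ ∘ U†)
            <-> lower_star (frobenius_cup δ γ) U = U).
    rewrite (conj_frobenius_cup δ γ U U_isometry).
    apply cup_invariant_iff_lower_star;
      [apply frobenius_snake_l | apply frobenius_snake_r | ]; assumption.
Qed.
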